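(* Let $P,Q\in\Gamma_n$ and $0<r\le R$ with $r\le p_i/q_i\le R$ for all $i$. Let $s,t\in\mathbb{R}$. If $s+t\le1$ and $t\le-1$, then $$\frac{1}{4r^{t+1}}\Big(\frac{r+1}{2r}\Big)^{s-2}\Phi_t(P\|Q)\le\Omega_s(P\|Q)\le\frac{1}{4R^{t+1}}\Big(\frac{R+1}{2R}\Big)^{s-2}\Phi_t(P\|Q).$$ If $s+t\ge1$ and $t\ge-1$, then $$\frac{1}{4R^{t+1}}\Big(\frac{R+1}{2R}\Big)^{s-2}\Phi_t(P\|Q)\le\Omega_s(P\|Q)\le\frac{1}{4r^{t+1}}\Big(\frac{r+1}{2r}\Big)^{s-2}\Phi_t(P\|Q).$$
   Context: $\Gamma_n=\{P=(p_1,\dots,p_n): p_i>0,\ \sum_i p_i=1\}$, $n\ge2$. For $P,Q\in\Gamma_n$ and $s\in\mathbb{R}$: $\Phi_s(P\|Q)=[s(s-1)]^{-1}\big[\sum_i p_i^s q_i^{1-s}-1\big]$ for $s\ne0,1$; $\Phi_0(P\|Q)=\sum_i q_i\ln(q_i/p_i)$; $\Phi_1(P\|Q)=\sum_i p_i\ln(p_i/q_i)$. $\Omega_s(P\|Q)=[s(s-1)]^{-1}\big[\sum_i p_i\big(\frac{p_i+q_i}{2p_i}\big)^s-1\big]$ for $s\ne0,1$; $\Omega_0(P\|Q)=\sum_i p_i\ln\frac{2p_i}{p_i+q_i}$; $\Omega_1(P\|Q)=\sum_i\frac{p_i+q_i}{2}\ln\frac{p_i+q_i}{2p_i}$. *)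

From Stdlib Require Import Reals.
Open Scope R_scope.

Fixpoint sumn (n : nat) (f : nat -> R) : R :=
  match n with
  | O => 0
  | S k => sumn k f + f k
  end.

Definition in_Gamma (n : nat) (p : nat -> R) : Prop :=
  (forall i, (i < n)%nat -> 0 < p i) /\ sumn n p = 1.

Definition Phi (n : nat) (s : R) (p q : nat -> R) : R :=
  if Req_EM_T s 0 then sumn n (fun i => q i * ln (q i / p i))
  else if Req_EM_T s 1 then sumn n (fun i => p i * ln (p i / q i))
  else / (s * (s - 1)) *
       (sumn n (fun i => Rpower (p i) s * Rpower (q i) (1 - s)) - 1).

Definition Omega (n : nat) (s : R) (p q : nat -> R) : R :=
  if Req_EM_T s 0 then sumn n (fun i => p i * ln (2 * p i / (p i + q i)))
  else if Req_EM_T s 1 then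
    sumn n (fun i => (p i + q i) / 2 * ln ((p i + q i) / (2 * p i)))
  else / (s * (s - 1)) *
       (sumn n (fun i => p i * Rpower ((p i + q i) / (2 * p i)) s) - 1).

(* Both Omega_s and Phi_t are Csiszar divergences sum_i q_i f(p_i/q_i) whose generators f_s and
   g_t vanish at 1 and satisfy f_s'' = w g_t'' with the weight
   w(x) = 1/(4 x^(t+1)) ((x+1)/(2x))^(s-2).  If m <= w on [r, R], then f_s - m g_t is convex on
   [r, R] and vanishes at 1, so it lies above its tangent at 1; since sum p_i = sum q_i the tangent
   terms cancel, giving m Phi_t <= Omega_s (and symmetrically for w <= m).  Finally ln w is
   -(t+1) ln(x+1) + (s+t-1) ln(1+1/x) up to a constant, so under either pair of sign conditions
   w is monotone and its extreme values on [r, R] are attained at r and R. *)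
From Stdlib Require Import Reals Lra Lia.
From Coquelicot Require Import Coquelicot.
Open Scope R_scope.

Lemma sumn_ext n f g : (forall i, (i < n)%nat -> f i = g i) -> sumn n f = sumn n g.
Proof.
  induction n as [|n IH]; intros h; simpl; [reflexivity|].
  rewrite IH, h by (intros; try apply h; lia). reflexivity.
Qed.

Lemma sumn_le n f g : (forall i, (i < n)%nat -> f i <= g i) -> sumn n f <= sumn n g.
Proof.
  induction n as [|n IH]; intros h; simpl; [lra|].
  apply Rplus_le_compat; [apply IH; intros; apply h; lia | apply h; lia].
Qed.

Lemma sumn_lt n f g : (0 < n)%nat -> (forall i, (i < n)%nat -> f i < g i) ->
  sumn n f < sumn n g.
Proof.
  intros hn h. destruct n as [|n]; [lia|]. simpl.
  apply Rplus_le_lt_compat; [apply sumn_le; intros; apply Rlt_le, h; lia | apply h; lia].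
Qed.

Lemma sumn_minus n f g : sumn n (fun i => f i - g i) = sumn n f - sumn n g.
Proof. induction n as [|n IH]; simpl; [ring|]. rewrite IH. ring. Qed.

Lemma sumn_scal n c f : sumn n (fun i => c * f i) = c * sumn n f.
Proof. induction n as [|n IH]; simpl; [ring|]. rewrite IH. ring. Qed.

Lemma sumn_sub_mass_scal n c f q : sumn n q = 1 ->
  c * (sumn n f - 1) = sumn n (fun i => c * (f i - q i)).
Proof. intros sq. rewrite sumn_scal, sumn_minus, sq. reflexivity. Qed.

Lemma in_Gamma_ratio_bounds n p q r R0 : (0 < n)%nat -> in_Gamma n p -> in_Gamma n q ->
  (forall i, (i < n)%nat -> r <= p i / q i <= R0) -> r <= 1 <= R0.
Proof.
  intros hn [pp sp] [pq sq] h.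
  assert (hq : forall i, (i < n)%nat -> p i = p i / q i * q i)
    by (intros i hi; specialize (pq i hi); field; lra).
  split.
  - apply Rnot_lt_le. intros hr.
    assert (sumn n q < sumn n p) by
      (apply sumn_lt; auto; intros i hi; rewrite (hq i hi);
       specialize (h i hi); specialize (pq i hi); nra).
    lra.
  - apply Rnot_lt_le. intros hR.
    assert (sumn n p < sumn n q) by
      (apply sumn_lt; auto; intros i hi; rewrite (hq i hi);
       specialize (h i hi); specialize (pq i hi); nra).
    lra.
Qed.

Section ConvexAboveTangent.

Variables (f f1 f2 : R -> R) (a b : R).
Hypothesis f_f1 : forall y, a <= y <= b -> is_derive f y (f1 y).
Hypothesis f1_f2 : forall y, a <= y <= b -> is_derive f1 y (f2 y).
Hypothesis f2_ge0 : forall y, a <= y <= b -> 0 <= f2 y.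

Lemma MVT_in_interval (g g1 : R -> R) x0 x :
  (forall y, a <= y <= b -> is_derive g y (g1 y)) -> a <= x0 <= b -> a <= x <= b ->
  exists c, a <= c <= b /\ (c - x0) * (x - x0) >= 0 /\ g x - g x0 = g1 c * (x - x0).
Proof.
  intros dg hx0 hx.
  assert (hab : forall y, Rmin x0 x <= y <= Rmax x0 x -> a <= y <= b)
    by (intros y; unfold Rmin, Rmax; destruct Rle_dec; lra).
  destruct (MVT_gen g x0 x g1) as [c [hc e]].
  - intros y hy. apply dg, hab. lra.
  - intros y hy. apply continuity_pt_filterlim.
    apply (@ex_derive_continuous R_AbsRing R_NormedModule).
    eexists. apply dg, hab, hy.
  - exists c. split; [apply hab, hc|]. split; [|exact e].
    revert hc; unfold Rmin, Rmax; destruct Rle_dec; intros; nra.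
Qed.

Lemma convex_above_tangent x0 x : a <= x0 <= b -> a <= x <= b ->
  f x0 + f1 x0 * (x - x0) <= f x.
Proof.
  intros hx0 hx.
  (* Two mean values: f x - f x0 - f1 x0 (x - x0) = f2 d (c - x0) (x - x0), c between x0 and x. *)
  destruct (MVT_in_interval f f1 x0 x f_f1 hx0 hx) as [c [hc [hcx ef]]].
  destruct (MVT_in_interval f1 f2 x0 c f1_f2 hx0 hc) as [d [hd [_ ef1]]].
  assert (0 <= f2 d * ((c - x0) * (x - x0))) by (apply Rmult_le_pos; [apply f2_ge0|]; lra).
  nra.
Qed.

End ConvexAboveTangent.

Definition csiszar n (f : R -> R) (p q : nat -> R) : R := sumn n (fun i => q i * f (p i / q i)).

Section CsiszarComparison.

Variables (n : nat) (p q : nat -> R) (r R0 : R).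
Hypotheses (n_gt0 : (0 < n)%nat) (p_Gamma : in_Gamma n p) (q_Gamma : in_Gamma n q).
Hypothesis ratio_bounds : forall i, (i < n)%nat -> r <= p i / q i <= R0.

Lemma csiszar_ge0 (h h1 h2 : R -> R) :
  (forall y, r <= y <= R0 -> is_derive h y (h1 y)) ->
  (forall y, r <= y <= R0 -> is_derive h1 y (h2 y)) ->
  (forall y, r <= y <= R0 -> 0 <= h2 y) -> h 1 = 0 ->
  0 <= csiszar n h p q.
Proof.
  intros dh dh1 h2_ge0 h_1.
  pose proof (in_Gamma_ratio_bounds n p q r R0 n_gt0 p_Gamma q_Gamma ratio_bounds) as r1R.
  destruct p_Gamma as [pp sp], q_Gamma as [pq sq].
  assert (tangent_sum : sumn n (fun i => h1 1 * p i - h1 1 * q i) = 0)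
    by (rewrite sumn_minus, !sumn_scal, sp, sq; ring).
  rewrite <- tangent_sum. apply sumn_le. intros i hi.
  pose proof (convex_above_tangent h h1 h2 r R0 dh dh1 h2_ge0 1 (p i / q i) r1R
                (ratio_bounds i hi)) as ht.
  specialize (pq i hi).
  replace (h1 1 * p i - h1 1 * q i) with (q i * (h 1 + h1 1 * (p i / q i - 1)))
    by (rewrite h_1; field; lra).
  apply Rmult_le_compat_l; lra.
Qed.

Lemma csiszar_le (f f1 f2 g g1 g2 : R -> R) :
  (forall y, r <= y <= R0 -> is_derive f y (f1 y)) ->
  (forall y, r <= y <= R0 -> is_derive f1 y (f2 y)) ->
  (forall y, r <= y <= R0 -> is_derive g y (g1 y)) ->
  (forall y, r <= y <= R0 -> is_derive g1 y (g2 y)) ->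
  (forall y, r <= y <= R0 -> f2 y <= g2 y) -> f 1 = 0 -> g 1 = 0 ->
  csiszar n f p q <= csiszar n g p q.
Proof.
  intros df df1 dg dg1 f2_le f_1 g_1.
  assert (hdiff : 0 <= csiszar n (fun y => g y - f y) p q).
  { apply (csiszar_ge0 _ (fun y => g1 y - f1 y) (fun y => g2 y - f2 y)).
    - intros y hy. apply (is_derive_minus g f); auto.
    - intros y hy. apply (is_derive_minus g1 f1); auto.
    - intros y hy. specialize (f2_le y hy). lra.
    - rewrite f_1, g_1. ring. }
  unfold csiszar in *.
  rewrite (sumn_ext n _ (fun i => q i * g (p i / q i) - q i * f (p i / q i))),
    sumn_minus in hdiff by (intros; ring).
  lra.
Qed.

Lemma csiszar_scal c f : csiszar n (fun y => c * f y) p q = c * csiszar n f p q.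
Proof.
  unfold csiszar. rewrite <- sumn_scal. apply sumn_ext. intros. ring.
Qed.

End CsiszarComparison.

Definition omega_gen s x :=
  if Req_EM_T s 0 then x * ln (2 * x / (x + 1))
  else if Req_EM_T s 1 then (x + 1) / 2 * ln ((x + 1) / (2 * x))
  else / (s * (s - 1)) * (x * Rpower ((x + 1) / (2 * x)) s - 1).

Definition omega_gen_d1 s x :=
  if Req_EM_T s 0 then ln (2 * x / (x + 1)) + / (x + 1)
  else if Req_EM_T s 1 then / 2 * ln ((x + 1) / (2 * x)) - / (2 * x)
  else Rpower ((x + 1) / (2 * x)) s * (x + 1 - s) / ((x + 1) * (s * (s - 1))).

Definition omega_gen_d2 s x := Rpower ((x + 1) / (2 * x)) s / (x * (x + 1) ^ 2).

Definition phi_gen t x :=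
  if Req_EM_T t 0 then - ln x
  else if Req_EM_T t 1 then x * ln x
  else / (t * (t - 1)) * (Rpower x t - 1).

Definition phi_gen_d1 t x :=
  if Req_EM_T t 0 then - / x
  else if Req_EM_T t 1 then ln x + 1
  else Rpower x t / ((t - 1) * x).

Definition phi_gen_d2 t x := Rpower x t / x ^ 2.

Ltac derive_side_conditions := repeat split; try lra;
  try (apply Rmult_lt_0_compat; [lra | apply Rinv_0_lt_compat; lra]);
  try (repeat apply Rmult_integral_contrapositive_currified; lra).

Ltac derive_gen :=
  auto_derive; [derive_side_conditions | unfold Rdiv; field; derive_side_conditions].

Lemma is_derive_omega_gen s x : 0 < x -> is_derive (omega_gen s) x (omega_gen_d1 s x).
Proof.
  intro hx. unfold omega_gen, omega_gen_d1, Rpower.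
  destruct (Req_EM_T s 0); [|destruct (Req_EM_T s 1)]; derive_gen.
Qed.

Lemma is_derive_omega_gen_d1 s x : 0 < x -> is_derive (omega_gen_d1 s) x (omega_gen_d2 s x).
Proof.
  intro hx. unfold omega_gen_d2, omega_gen_d1, Rpower.
  destruct (Req_EM_T s 0); [|destruct (Req_EM_T s 1)]; subst.
  - rewrite Rmult_0_l, exp_0. derive_gen.
  - rewrite Rmult_1_l, exp_ln by (apply Rdiv_lt_0_compat; lra). derive_gen.
  - derive_gen.
Qed.

Lemma is_derive_phi_gen t x : 0 < x -> is_derive (phi_gen t) x (phi_gen_d1 t x).
Proof.
  intro hx. unfold phi_gen, phi_gen_d1, Rpower.
  destruct (Req_EM_T t 0); [|destruct (Req_EM_T t 1)]; derive_gen.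
Qed.

Lemma is_derive_phi_gen_d1 t x : 0 < x -> is_derive (phi_gen_d1 t) x (phi_gen_d2 t x).
Proof.
  intro hx. unfold phi_gen_d2, phi_gen_d1, Rpower.
  destruct (Req_EM_T t 0); [|destruct (Req_EM_T t 1)]; subst.
  - rewrite Rmult_0_l, exp_0. derive_gen.
  - rewrite Rmult_1_l, exp_ln by lra. derive_gen.
  - derive_gen.
Qed.

Lemma omega_gen_1 s : omega_gen s 1 = 0.
Proof.
  unfold omega_gen, Rpower.
  replace (2 * 1 / (1 + 1)) with 1 by field. replace ((1 + 1) / (2 * 1)) with 1 by field.
  rewrite ln_1, !Rmult_0_r, exp_0.
  destruct Req_EM_T; [ring|]. destruct Req_EM_T; ring.
Qed.

Lemma phi_gen_1 t : phi_gen t 1 = 0.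
Proof.
  unfold phi_gen, Rpower. rewrite ln_1, !Rmult_0_r, exp_0.
  destruct Req_EM_T; [ring|]. destruct Req_EM_T; ring.
Qed.

Lemma phi_gen_d2_gt0 t x : 0 < x -> 0 < phi_gen_d2 t x.
Proof. intro. apply Rdiv_lt_0_compat; [apply exp_pos | apply pow_lt; lra]. Qed.

Lemma Omega_csiszar n s p q : (forall i, (i < n)%nat -> 0 < p i /\ 0 < q i) ->
  sumn n q = 1 -> Omega n s p q = csiszar n (omega_gen s) p q.
Proof.
  intros hpq sq. unfold Omega, csiszar, omega_gen.
  destruct (Req_EM_T s 0); [|destruct (Req_EM_T s 1)].
  - apply sumn_ext. intros i hi. destruct (hpq i hi).
    replace (2 * (p i / q i) / (p i / q i + 1)) with (2 * p i / (p i + q i)) by (field; lra).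
    field. lra.
  - apply sumn_ext. intros i hi. destruct (hpq i hi).
    replace ((p i / q i + 1) / (2 * (p i / q i))) with ((p i + q i) / (2 * p i)) by (field; lra).
    field. lra.
  - rewrite (sumn_sub_mass_scal n _ _ q sq). apply sumn_ext. intros i hi. destruct (hpq i hi).
    replace ((p i / q i + 1) / (2 * (p i / q i))) with ((p i + q i) / (2 * p i)) by (field; lra).
    field. lra.
Qed.

Lemma Rpower_mult_complement x y t : 0 < x -> 0 < y ->
  Rpower x t * Rpower y (1 - t) = y * Rpower (x / y) t.
Proof.
  intros hx hy. unfold Rpower, Rdiv. rewrite <- (exp_ln y) at 2 by lra.
  rewrite ln_mult, ln_Rinv, <- !exp_plus by (try apply Rinv_0_lt_compat; lra).
  f_equal. ring.
Qed.

Lemma Phi_csiszar n t p q : (forall i, (i < n)%nat -> 0 < p i /\ 0 < q i) ->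
  sumn n q = 1 -> Phi n t p q = csiszar n (phi_gen t) p q.
Proof.
  intros hpq sq. unfold Phi, csiszar, phi_gen.
  destruct (Req_EM_T t 0); [|destruct (Req_EM_T t 1)].
  - apply sumn_ext. intros i hi. destruct (hpq i hi).
    replace (q i / p i) with (/ (p i / q i)) by (field; lra).
    rewrite ln_Rinv by (apply Rdiv_lt_0_compat; lra). ring.
  - apply sumn_ext. intros i hi. destruct (hpq i hi). field. lra.
  - rewrite (sumn_sub_mass_scal n _ _ q sq). apply sumn_ext. intros i hi. destruct (hpq i hi).
    rewrite Rpower_mult_complement by lra. ring.
Qed.

Definition weight s t x := / (4 * Rpower x (t + 1)) * Rpower ((x + 1) / (2 * x)) (s - 2).

Lemma omega_gen_d2_weight s t x : 0 < x -> omega_gen_d2 s x = weight s t x * phi_gen_d2 t x.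
Proof.
  intro hx. unfold omega_gen_d2, weight, phi_gen_d2, Rpower.
  set (l := ln ((x + 1) / (2 * x))).
  replace ((s - 2) * l) with (s * l + - (l + l)) by ring.
  replace ((t + 1) * ln x) with (t * ln x + ln x) by ring.
  rewrite !exp_plus, exp_Ropp, exp_plus. unfold l.
  rewrite !exp_ln by (try apply Rdiv_lt_0_compat; lra).
  assert (0 < exp (t * ln x)) by apply exp_pos.
  field. lra.
Qed.

Lemma weight_exp s t x : 0 < x -> weight s t x =
  / 4 * exp (- (s - 2) * ln 2 - (t + 1) * ln (x + 1) + (s + t - 1) * (ln (x + 1) - ln x)).
Proof.
  intro hx. unfold weight, Rpower, Rdiv.
  rewrite ln_mult, ln_Rinv, ln_mult by (try apply Rinv_0_lt_compat; lra).
  rewrite Rinv_mult, <- exp_Ropp, Rmult_assoc, <- exp_plus.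
  do 2 f_equal. ring.
Qed.

Lemma ln_succ_div_decreasing x y : 0 < x -> x <= y -> ln (y + 1) - ln y <= ln (x + 1) - ln x.
Proof.
  intros hx h.
  assert (hln : ln (x * (y + 1)) <= ln (y * (x + 1))) by (apply ln_le; nra).
  rewrite !ln_mult in hln by lra. lra.
Qed.

Lemma exp_le_compat a b : a <= b -> exp a <= exp b.
Proof.
  intros [hlt | ->]; [apply Rlt_le, exp_increasing, hlt | apply Rle_refl].
Qed.

Lemma weight_increasing s t x y : t <= -1 -> s + t <= 1 -> 0 < x -> x <= y ->
  weight s t x <= weight s t y.
Proof.
  intros ht hst hx h. rewrite !weight_exp by lra.
  apply Rmult_le_compat_l, exp_le_compat; [lra|].
  pose proof (ln_succ_div_decreasing x y hx h).
  pose proof (ln_le (x + 1) (y + 1) ltac:(lra) ltac:(lra)).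
  nra.
Qed.

Lemma weight_decreasing s t x y : t >= -1 -> s + t >= 1 -> 0 < x -> x <= y ->
  weight s t y <= weight s t x.
Proof.
  intros ht hst hx h. rewrite !weight_exp by lra.
  apply Rmult_le_compat_l, exp_le_compat; [lra|].
  pose proof (ln_succ_div_decreasing x y hx h).
  pose proof (ln_le (x + 1) (y + 1) ltac:(lra) ltac:(lra)).
  nra.
Qed.

Section WeightBounds.

Variables (n : nat) (p q : nat -> R) (r R0 s t m : R).
Hypotheses (n_gt0 : (0 < n)%nat) (p_Gamma : in_Gamma n p) (q_Gamma : in_Gamma n q).
Hypothesis r_gt0 : 0 < r.
Hypothesis ratio_bounds : forall i, (i < n)%nat -> r <= p i / q i <= R0.

Lemma Omega_Phi_csiszar :
  Omega n s p q = csiszar n (omega_gen s) p q /\ Phi n t p q = csiszar n (phi_gen t) p q.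
Proof.
  assert (hpq : forall i, (i < n)%nat -> 0 < p i /\ 0 < q i)
    by (intros; split; [apply p_Gamma | apply q_Gamma]; auto).
  split; [apply Omega_csiszar | apply Phi_csiszar]; auto; apply q_Gamma.
Qed.

Lemma Phi_scal_le_Omega : (forall y, r <= y <= R0 -> m <= weight s t y) ->
  m * Phi n t p q <= Omega n s p q.
Proof.
  intros hm. destruct Omega_Phi_csiszar as [-> ->]. rewrite <- csiszar_scal.
  apply (csiszar_le n p q r R0 n_gt0 p_Gamma q_Gamma ratio_bounds _
           (fun y => m * phi_gen_d1 t y) (fun y => m * phi_gen_d2 t y)
           _ (omega_gen_d1 s) (omega_gen_d2 s)).
  - intros y hy. apply is_derive_scal, is_derive_phi_gen. lra.
  - intros y hy. apply is_derive_scal, is_derive_phi_gen_d1. lra.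
  - intros y hy. apply is_derive_omega_gen. lra.
  - intros y hy. apply is_derive_omega_gen_d1. lra.
  - intros y hy. rewrite (omega_gen_d2_weight s t) by lra.
    apply Rmult_le_compat_r; [apply Rlt_le, phi_gen_d2_gt0; lra | auto].
  - rewrite phi_gen_1. ring.
  - apply omega_gen_1.
Qed.

Lemma Omega_le_Phi_scal : (forall y, r <= y <= R0 -> weight s t y <= m) ->
  Omega n s p q <= m * Phi n t p q.
Proof.
  intros hm. destruct Omega_Phi_csiszar as [-> ->]. rewrite <- csiszar_scal.
  apply (csiszar_le n p q r R0 n_gt0 p_Gamma q_Gamma ratio_bounds
           _ (omega_gen_d1 s) (omega_gen_d2 s)
           _ (fun y => m * phi_gen_d1 t y) (fun y => m * phi_gen_d2 t y)).
  - intros y hy. apply is_derive_omega_gen. lra.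
  - intros y hy. apply is_derive_omega_gen_d1. lra.
  - intros y hy. apply is_derive_scal, is_derive_phi_gen. lra.
  - intros y hy. apply is_derive_scal, is_derive_phi_gen_d1. lra.
  - intros y hy. rewrite (omega_gen_d2_weight s t) by lra.
    apply Rmult_le_compat_r; [apply Rlt_le, phi_gen_d2_gt0; lra | auto].
  - apply omega_gen_1.
  - rewrite phi_gen_1. ring.
Qed.

End WeightBounds.

Theorem theorem4p1 (n : nat) (p q : nat -> R) (r RR s t : R) :
  (2 <= n)%nat ->
  in_Gamma n p -> in_Gamma n q ->
  0 < r -> r <= RR ->
  (forall i, (i < n)%nat -> r <= p i / q i <= RR) ->
  (s + t <= 1 -> t <= -1 ->
     / (4 * Rpower r (t + 1)) * Rpower ((r + 1) / (2 * r)) (s - 2) * Phi n t p q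
       <= Omega n s p q
     /\ Omega n s p q
       <= / (4 * Rpower RR (t + 1)) * Rpower ((RR + 1) / (2 * RR)) (s - 2) * Phi n t p q)
  /\
  (s + t >= 1 -> t >= -1 ->
     / (4 * Rpower RR (t + 1)) * Rpower ((RR + 1) / (2 * RR)) (s - 2) * Phi n t p q
       <= Omega n s p q
     /\ Omega n s p q
       <= / (4 * Rpower r (t + 1)) * Rpower ((r + 1) / (2 * r)) (s - 2) * Phi n t p q).
Proof.
  intros hn p_Gamma q_Gamma r_gt0 r_le_RR ratio_bounds.
  assert (n_gt0 : (0 < n)%nat) by lia.
  split; intros hst ht; split.
  - apply (Phi_scal_le_Omega n p q r RR); auto.
    intros y hy. apply weight_increasing; lra.
  - apply (Omega_le_Phi_scal n p q r RR); auto.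
    intros y hy. apply weight_increasing; lra.
  - apply (Phi_scal_le_Omega n p q r RR); auto.
    intros y hy. apply weight_decreasing; lra.
  - apply (Omega_le_Phi_scal n p q r RR); auto.
    intros y hy. apply weight_decreasing; lra.
Qed.
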